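(* Let $G$ be a finite group and $p\ge 5$ a prime. If $\mathrm{pr}^*_G(p,p')>2/5$, then the Sylow $p$-subgroups of $G$ are contained in the soluble radical $R(G)$. In particular, $G$ is $p$-soluble.
   Context: For subsets $X,Y$ of a finite group $G$, $\Pr(X,Y)=|\{(x,y)\in X\times Y: xy=yx\}|/(|X||Y|)$. For sets of primes $\pi_1,\pi_2$, $\mathrm{pr}^*_G(\pi_1,\pi_2)$ denotes the maximum real number $\epsilon$ such that for every pair of distinct primes $r\in\pi_1$, $s\in\pi_2$ there exist a Sylow $r$-subgroup $R$ and a Sylow $s$-subgroup $S$ of $G$ with $\Pr(R,S)\ge\epsilon$ (the Sylow subgroup for a prime not dividing $|G|$ is trivial); $\mathrm{pr}^*_G(p,\pi_2)=\mathrm{pr}^*_G(\{p\},\pi_2)$. $p'$ denotes the set of primes different from $p$. $R(G)$ is the largest soluble normal subgroup of $G$. *)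

From HB Require Import structures.
From mathcomp Require Import all_boot all_order all_algebra all_fingroup all_solvable.
Set Implicit Arguments. Unset Strict Implicit. Unset Printing Implicit Defensive.
Import Order.TTheory GRing.Theory Num.Theory.

Definition commprob (gT : finGroupType) (X Y : {set gT}) : rat :=
  (#|[set u in setX X Y | (u.1 * u.2 == u.2 * u.1)%g]|%:R / (#|X| * #|Y|)%:R)%R.

(* Primes not dividing |G| (in particular all primes > |G|) have trivial Sylow
   subgroups, giving Pr = 1, so they do not affect the minimum; hence we range
   over primes r, s <= |G|. *)
Definition prstar (gT : finGroupType) (G : {group gT}) (pi1 pi2 : nat_pred) : rat :=
  \big[Order.min/1%R]_(r < #|G|.+1 | prime r && (nat_of_ord r \in pi1))
    \big[Order.min/1%R]_(s < #|G|.+1 | [&& prime s, nat_of_ord s \in pi2 & r != s :> nat])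
      \big[Order.max/0%R]_(R : {group gT} | (R \in 'Syl_(nat_of_ord r)(G))%g)
        \big[Order.max/0%R]_(S : {group gT} | (S \in 'Syl_(nat_of_ord s)(G))%g) commprob R S.

Definition solrad (gT : finGroupType) (G : {group gT}) : {set gT} :=
  (<<\bigcup_(H : {group gT} | (H <| G) && solvable H) H>>)%g.

Definition p_solvable (p : nat) (gT : finGroupType) (G : {group gT}) : Prop :=
  exists s : seq {group gT},
    path (fun H K : {group gT} =>
            ((H <| K) && (p.-group (K / H) || p^'.-group (K / H)))%g) 1%G s
    /\ last 1%G s = G.

(* Let R be a Sylow p-subgroup and S a Sylow s-subgroup, s <> p.  An element
   of S outside C_S(R) centralises at most a p-th of R, so Pr(R,S) > 2/5 with
   p >= 5 forces |S : C_S(R)| < 4.  As C_S(R) normalises R, the s-part of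
   n_p = |G : N_G(R)| is then at most 3 for every prime s <> p, so n_p divides
   6, and n_p = 1 mod p leaves n_p = 1, or p = 5 and n_p = 6.  In the latter
   case the kernel K of the action of G on its six Sylow 5-subgroups contains
   every such C_S(R) and a subgroup of index 5 of each Sylow 5-subgroup, so
   |G : K| divides 30; the Sylow 5-subgroup of G/K is then normal, and by the
   Frattini argument so is that of G, a contradiction.  A normal Sylow
   p-subgroup P lies in R(G), and 1 <| P <| G is a p-soluble series. *)

From HB Require Import structures.
From mathcomp Require Import all_boot all_order all_algebra all_fingroup all_solvable.
From mathcomp Require Import zify.
Import Order.TTheory GRing.Theory Num.Theory.

Set Implicit Arguments.
Unset Strict Implicit.
Unset Printing Implicit Defensive.

Section CommutingPairs.

Variable gT : finGroupType.
Implicit Types (X Y : {set gT}) (R S H : {group gT}).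
Local Open Scope group_scope.

Lemma card_commuting_pairs X Y :
  #|[set u in setX X Y | u.1 * u.2 == u.2 * u.1]| = (\sum_(y in Y) #|'C_X[y]|)%N.
Proof.
rewrite -sum1_card (eq_bigl (fun u => (u.1 \in X) &&
  ((u.2 \in Y) && (u.1 * u.2 == u.2 * u.1)))); last by move=> u; rewrite !inE andbA.
rewrite -(pair_big_dep (mem X) (fun x y => (y \in Y) && (x * y == y * x))
  (fun _ _ => 1%N)) /=.
rewrite (exchange_big_dep (mem Y)) /=; last by move=> x y _ /andP[].
apply: eq_bigr => y Yy; rewrite -sum1_card; apply: eq_bigl => x.
by rewrite Yy in_setI cent1E.
Qed.

Lemma pgroup_proper_card (p : nat) R H : p.-group R -> H \proper R -> (p * #|H| <= #|R|)%N.
Proof.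
move=> pR /andP[sHR]; rewrite -indexg_gt1 -(Lagrange sHR) mulnC leq_pmul2l //.
have [[|k] ->] := p_natP (pnat_dvd (dvdn_indexg R H) pR) => // /ltnW.
by rewrite expnS muln_gt0 => /andP[_ /leq_pmulr].
Qed.

Lemma pgroup_card_cent1 (p : nat) R y :
  p.-group R -> y \notin 'C(R) -> (p * #|'C_R[y]| <= #|R|)%N.
Proof.
move=> pR cRy'; apply: pgroup_proper_card pR _.
by rewrite properE subsetIl subsetI subxx sub_cent1 cRy'.
Qed.

Lemma sum_card_cent1_pgroup (p : nat) R S : p.-group R ->
  (p * \sum_(y in S) #|'C_R[y]| <= #|R| * (p * #|'C_S(R)| + #|S :\: 'C(R)|))%N.
Proof.
move=> pR; rewrite (big_setID 'C(R)) /= !mulnDr big_distrr /=.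
apply: leq_add.
  rewrite (eq_bigr (fun _ => p * #|R|)%N) ?sum_nat_const.
    by rewrite mulnCA mulnA [X in _ <= X]mulnC.
  by move=> y /setIP[_ cRy]; rewrite (setIidPl _) // sub_cent1.
rewrite big_distrr /= [X in _ <= X]mulnC -sum_nat_const.
by apply: leq_sum => y /setDP[_ cRy']; apply: pgroup_card_cent1.
Qed.

Lemma commprob_gt_two_fifths (p : nat) R S : prime p -> (5 <= p)%N -> p.-group R ->
  (2%:R / 5%:R < commprob R S :> rat)%R -> (#|S : 'C_S(R)| < 4)%N.
Proof.
move=> p_pr p_ge5 pR; rewrite /commprob card_commuting_pairs.
rewrite -(ltn_pmul2l (cardG_gt0 'C_S(R))) Lagrange ?subsetIl //.
have := sum_card_cent1_pgroup S pR.
set N := (\sum_(y in S) _)%N; set c := #|'C_S(R)|; set d := #|S :\: _| => le_pN.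
have card_S : #|S| = (c + d)%N by rewrite /c /d cardsID.
have R_gt0 := cardG_gt0 R; have S_gt0 := cardG_gt0 S.
rewrite ltr_pdivlMr ?ltr0n ?muln_gt0 ?R_gt0 // mulrAC ltr_pdivrMr //.
rewrite -!natrM ltr_nat card_S -(ltn_pmul2l (prime_gt0 p_pr)) => lt_pN.
(* 2p|R||S| < 5pN <= 5|R|(pc + d), and p >= 5 turns (2p - 5)d < 3pc into d < 3c. *)
have {lt_pN} lt_pRS : (p * (2 * (#|R| * (c + d))) < 5 * (#|R| * (p * c + d)))%N.
  by apply: leq_trans lt_pN _; rewrite [(N * 5)%N]mulnC mulnCA leq_mul2l le_pN orbT.
have : (#|R| * (2 * p * (c + d)) < #|R| * (5 * (p * c + d)))%N by lia.
rewrite ltn_pmul2l //; nia.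
Qed.

End CommutingPairs.

Lemma bigmax_gt_witness d (T : orderType d) (I : finType) (P : pred I) (F : I -> T) x c :
  (x <= c)%O -> (c < \big[Order.max/x]_(i | P i) F i)%O -> exists2 i, P i & (c < F i)%O.
Proof.
move=> le_xc; have [/exists_inP[i Pi ltFi] _ | /exists_inPn ltF'] :=
  boolP [exists (i | P i), (c < F i)%O]; first by exists i.
by rewrite ltNge => /negP[]; apply/bigmax_leP; split=> // i Pi; rewrite leNgt ltF'.
Qed.

Lemma dvdn_mul6_partn n p : 0 < n ->
  (forall s, prime s -> s != p -> s %| n -> n`_s < 4) -> n %| 6 * n`_p.
Proof.
move=> n_gt0 small_part; apply/dvdn_partP => // s.
rewrite mem_primes => /and3P[s_pr _ s_dvd].
have [-> | s'p] := eqVneq s p; first exact: dvdn_mull.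
apply: dvdn_mulr; move: (small_part s s_pr s'p s_dvd) (part_gt0 s n).
by case: (n`_s) => [|[|[|[|]]]].
Qed.

Lemma dvdn6_modn_eq1 n p : n %| 6 -> 5 <= p -> n %% p = 1 -> n = 1 \/ p = 5 /\ n = 6.
Proof.
rewrite (dvdn_divisors _ (isT : 0 < 6)) (_ : divisors 6 = [:: 1; 2; 3; 6]) //.
rewrite !inE => /or4P[] /eqP-> p_ge5; [by left | | |].
- by rewrite modn_small // (leq_trans _ p_ge5).
- by rewrite modn_small // (leq_trans _ p_ge5).
have [-> | p_ne5] := eqVneq p 5; first by right.
have [-> // | p_ne6] := eqVneq p 6.
by rewrite modn_small //; lia.
Qed.

Section SylowConjugation.

Variables (gT : finGroupType) (G : {group gT}) (p : nat).
Implicit Types (A B M P Q R S : {group gT}).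
Local Open Scope group_scope.

Lemma card_Syl_eq1_normal P : p.-Sylow(G) P -> #|'Syl_p(G)| = 1%N -> P <| G.
Proof.
move=> sylP; rewrite (card_Syl sylP) => /eqP; rewrite indexg_eq1 subsetI => /andP[_ nPG].
by rewrite /normal (pHall_sub sylP).
Qed.

Lemma Sylow_norm_eq R Q : p.-Sylow(G) R -> p.-Sylow(G) Q -> R \subset 'N(Q) -> R = Q.
Proof.
move=> sylR sylQ nQR; have sylQN : p.-Sylow('N_G(Q)) Q by rewrite Sylow_subnorm.
have sRN : R \subset 'N_G(Q) by rewrite subsetI (pHall_sub sylR).
apply/val_inj/eqP; rewrite eqEcard (sub_normal_Hall sylQN (normalSG (pHall_sub sylQ)) sRN).
by rewrite (pHall_pgroup sylR) (card_Hall sylR) (card_Hall sylQ) /=.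
Qed.

Lemma acts_Syl_setD1 B R : B \subset G -> B \subset 'N(R) ->
  [acts B, on 'Syl_p(G) :\ R | 'JG].
Proof.
move=> sBG nRB; apply: actsD; first exact: subset_trans sBG (atrans_acts (Syl_trans p G)).
by rewrite /= astabs_set1 astab1JG.
Qed.

Lemma Syl_kernel_normal : 'C_G('Syl_p(G) | 'JG) <| G.
Proof.
rewrite /normal subsetIl normsI ?normG //.
exact: subset_trans (atrans_acts (Syl_trans p G)) (normal_norm (astab_normal _ _)).
Qed.

Lemma Syl_kernel_norm Q : Q \in 'Syl_p(G) -> 'C_G('Syl_p(G) | 'JG) \subset 'N(Q).
Proof.
move=> sylQ; apply/subsetP => x /setIP[_ /astabP/(_ Q sylQ) QxQ].
by apply/normP; move/(congr1 val): QxQ.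
Qed.

Lemma sub_Syl_kernel A : A \subset G -> {in 'Syl_p(G), forall Q, A \subset 'N(Q)} ->
  A \subset 'C_G('Syl_p(G) | 'JG).
Proof.
move=> sAG nSylA; apply/subsetP => a Aa; rewrite inE (subsetP sAG) //=.
by apply/astabP => Q sylQ; apply/val_inj/normP; apply: (subsetP (nSylA Q sylQ)).
Qed.

Lemma partn_indexg_dvd s A M S : s.-Sylow(G) S -> A \subset S -> A \subset M ->
  M \subset G -> (#|G : M|`_s %| #|S : A|)%N.
Proof.
move=> sylS sAS sAM sMG; have sA := pgroupS sAS (pHall_pgroup sylS).
rewrite -(dvdn_pmul2l (cardG_gt0 A)) Lagrange // (card_Hall sylS) -(Lagrange sMG).
by rewrite partnM ?cardG_gt0 ?indexg_gt0 // dvdn_mul // -(part_pnat_id sA) partn_dvd ?cardSg.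
Qed.

End SylowConjugation.

Definition cent_Syl_index_lt4 gT (G : {group gT}) (p s : nat) : Prop :=
  exists2 R : {group gT}, (R \in 'Syl_p(G))%g &
    exists2 S : {group gT}, (S \in 'Syl_s(G))%g & (#|S : 'C_S(R)|%g < 4)%N.

Section CentSylIndex.

Variables (gT : finGroupType) (G : {group gT}).
Local Open Scope group_scope.

Lemma prstar_gt_witness (pi1 pi2 : nat_pred) r s (c : rat) :
  (0 <= c)%R -> (c < prstar G pi1 pi2)%R ->
  prime r -> r \in pi1 -> prime s -> s \in pi2 -> r != s -> r <= #|G| -> s <= #|G| ->
  exists2 R : {group gT}, R \in 'Syl_r(G) &
    exists2 S : {group gT}, S \in 'Syl_s(G) & (c < commprob R S)%R.
Proof.
move=> c_ge0 lt_c r_pr pi1r s_pr pi2s r'ns le_rG le_sG.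
move/bigmin_gtP: lt_c => [_ /(_ (Ordinal (le_rG : r < #|G|.+1)))].
rewrite /= r_pr pi1r => /(_ isT) /bigmin_gtP[_ /(_ (Ordinal (le_sG : s < #|G|.+1)))].
rewrite /= s_pr pi2s r'ns => /(_ isT).
case/bigmax_gt_witness => // R sylR /bigmax_gt_witness[] // S sylS lt_cRS.
by exists R => //; exists S.
Qed.

Lemma prstar_gt_two_fifths_cent (p s : nat) : prime p -> (5 <= p)%N ->
  (2%:R / 5%:R < prstar G p p^' :> rat)%R -> prime s -> s != p -> s %| #|G| ->
  cent_Syl_index_lt4 G p s.
Proof.
move=> p_pr p_ge5 lt_pr s_pr s'p s_dvd.
have le_sG : s <= #|G| := dvdn_leq (cardG_gt0 G) s_dvd.
have [le_pG | lt_Gp] := leqP p #|G|.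
  have p's : p != s by rewrite eq_sym.
  have [R sylR [S sylS lt_RS]] := prstar_gt_witness
    (divr_ge0 (ler0n _ 2) (ler0n _ 5)) lt_pr p_pr (eqxx p) s_pr s'p p's le_pG le_sG.
  exists R => //; exists S => //; apply: commprob_gt_two_fifths p_pr p_ge5 _ lt_RS.
  by move: sylR; rewrite inE => /pHall_pgroup.
have [S sylS] := Sylow_exists s G.
exists 1%G; last by exists S; rewrite ?inE // cent1T setIT indexgg.
rewrite inE pHallE sub1G cards1 eq_sym part_p'nat // p'natE //.
by apply: contraL lt_Gp => /(dvdn_leq (cardG_gt0 G)); rewrite leqNgt.
Qed.

Lemma card_Syl_part_lt4 p s : cent_Syl_index_lt4 G p s -> (#|'Syl_p(G)|`_s < 4)%N.
Proof.
case=> R; rewrite inE => sylR [S]; rewrite inE => sylS; apply: leq_ltn_trans.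
have sCN : 'C_S(R) \subset 'N_G(R) by rewrite setISS ?cent_sub ?(pHall_sub sylS).
by rewrite (card_Syl sylR) dvdn_leq ?indexg_gt0 ?(partn_indexg_dvd sylS) ?subsetIl.
Qed.

Lemma card_Syl_dvdn6 p : prime p ->
  (forall s, prime s -> s != p -> s %| #|G| -> cent_Syl_index_lt4 G p s) ->
  (#|'Syl_p(G)| %| 6)%N.
Proof.
move=> p_pr small_index; have [P sylP] := Sylow_exists p G.
have n_gt0 : (0 < #|'Syl_p(G)|)%N by rewrite (card_Syl sylP) indexg_gt0.
have n_ppart : (#|'Syl_p(G)|`_p = 1)%N.
  by rewrite part_p'nat // p'natE // /dvdn card_Syl_mod.
suff : (#|'Syl_p(G)| %| 6 * #|'Syl_p(G)|`_p)%N by rewrite n_ppart muln1.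
apply: dvdn_mul6_partn n_gt0 _ => s s_pr s'p s_dvd; apply: card_Syl_part_lt4.
exact: small_index s_pr s'p (dvdn_trans s_dvd (card_Syl_dvd p G)).
Qed.

End CentSylIndex.

Section SylowCountSucc.

Variables (gT : finGroupType) (G R : {group gT}) (p : nat).
Local Open Scope group_scope.
Hypotheses (p_pr : prime p) (card_Syl_succ : #|'Syl_p(G)| = p.+1).
Hypothesis sylR : p.-Sylow(G) R.
Implicit Types (A Q : {group gT}).

Let card_Syl_setD1 : #|'Syl_p(G) :\ R| = p.
Proof. by move: card_Syl_succ; rewrite (cardsD1 R) inE sylR => -[]. Qed.

Let acts_Syl_setD1R : [acts R, on 'Syl_p(G) :\ R | 'JG].
Proof. exact (acts_Syl_setD1 p (pHall_sub sylR) (normG R)). Qed.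

Let dvdn_card_acts_Syl_setD1 (S : {set {group gT}}) :
  S \subset 'Syl_p(G) :\ R -> [acts R, on S | 'JG] -> (p %| #|S|)%N.
Proof.
move=> sSY nSR; have no_fix : 'Fix_(S | 'JG)(R) = set0.
  apply/setP => Q; rewrite in_set0 in_setI afixJG; apply/negbTE/andP => -[SQ nQR].
  have /setD1P[QR] := subsetP sSY Q SQ; rewrite inE => sylQ.
  by rewrite (Sylow_norm_eq sylR sylQ nQR) eqxx in QR.
by have := pgroup_fix_mod (pHall_pgroup sylR) nSR; rewrite no_fix cards0 mod0n => /eqP.
Qed.

(* A fixes R, and its fixed points among the p other Sylow p-subgroups number
   p mod s, so there are some; R permutes them without fixed points, so there
   are p of them, i.e. A fixes them all. *)
Lemma norm_Syl_of_cent s A : prime s -> s != p -> s.-group A -> A \subset G ->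
  A \subset 'C(R) -> {in 'Syl_p(G), forall Q, A \subset 'N(Q)}.
Proof.
move=> s_pr s'p sA sAG cRA; set F := 'Fix_('Syl_p(G) :\ R | 'JG)(A).
have sFY : F \subset 'Syl_p(G) :\ R := subsetIl _ _.
have F_gt0 : (0 < #|F|)%N.
  have := pgroup_fix_mod sA (acts_Syl_setD1 p sAG (subset_trans cRA (cent_sub R))).
  rewrite card_Syl_setD1 lt0n => modF; apply: contra s'p => /eqP F0.
  by rewrite -(dvdn_prime2 s_pr p_pr) /dvdn modF -/F F0 mod0n.
have nFR : [acts R, on F | 'JG].
  apply: actsI acts_Syl_setD1R _; have := acts_subnorm_fix 'JG A.
  by rewrite !setTI; apply: subset_trans; rewrite cents_norm // centsC.
have defF : F = 'Syl_p(G) :\ R.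
  apply/eqP; rewrite eqEcard sFY card_Syl_setD1.
  by rewrite (dvdn_leq F_gt0) ?dvdn_card_acts_Syl_setD1.
move=> Q sylQ; have [-> | QR] := eqVneq Q R; first exact: subset_trans cRA (cent_sub R).
have : Q \in F by rewrite defF in_setD1 QR.
by rewrite inE afixJG => /andP[].
Qed.

(* R permutes the p Sylow subgroups other than R transitively, so a point
   stabiliser has index p; being normal in R, it fixes all of them. *)
Lemma exists_index_norm_Syl :
  exists R0 : {group gT}, [/\ R0 \subset R, #|R : R0| = p
                            & {in 'Syl_p(G), forall Q, R0 \subset 'N(Q)}].
Proof.
have [Q YQ] : exists Q, Q \in 'Syl_p(G) :\ R.
  by apply/set0Pn; rewrite -card_gt0 card_Syl_setD1 prime_gt0.
set O := orbit 'JG R Q; have sOY : O \subset 'Syl_p(G) :\ R by rewrite acts_sub_orbit.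
have defO : O = 'Syl_p(G) :\ R.
  apply/eqP; rewrite eqEcard sOY card_Syl_setD1 dvdn_leq //.
    by rewrite card_gt0; apply/set0Pn; exists Q; apply: orbit_refl.
  exact: dvdn_card_acts_Syl_setD1 sOY (acts_orbit _ _ (subsetT R)).
have iR0 : #|R : 'N_R(Q)| = p by rewrite -card_Syl_setD1 -defO card_orbit astab1JG.
have nR0R : 'N_R(Q) <| R.
  apply: p_maximal_normal (pHall_pgroup sylR) (p_index_maximal _ _).
    exact: subsetIl.
  by rewrite iR0.
exists 'N_R(Q)%G; split=> // [|Q' sylQ']; first exact: subsetIl.
have [-> | Q'R] := eqVneq Q' R; first exact: subset_trans (subsetIl _ _) (normG R).
have : Q' \in O by rewrite defO in_setD1 Q'R.
case/orbitP => r Rr <-; rewrite /= normJ -(normP (subsetP (normal_norm nR0R) r Rr)).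
by rewrite conjSg subsetIr.
Qed.

End SylowCountSucc.

Section OrderDividingThirty.

Variable gT : finGroupType.
Implicit Types (H K P Q V : {group gT}).
Local Open Scope group_scope.

Lemma card_Syl_in_divisors q n H : prime q -> (0 < n)%N -> (#|H| %| n)%N ->
  #|'Syl_q(H)| \in [seq d <- divisors n | (d %% q == 1)%N].
Proof.
move=> q_pr n_gt0 dvd_Hn; rewrite mem_filter card_Syl_mod // eqxx /=.
by rewrite -dvdn_divisors // (dvdn_trans (card_Syl_dvd q H)).
Qed.

Lemma sum_card_TI_le H (X : {set {group gT}}) :
  {in X, forall Q, Q \subset H} -> {in X &, forall Q Q', Q != Q' -> Q :&: Q' = 1} ->
  (\sum_(Q in X) #|Q|.-1 <= #|H|.-1)%N.
Proof.
move=> sXH tiX; have card1 K : #|K|.-1 = #|K^#| by rewrite [#|K|](cardsD1 1) group1.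
rewrite card1 (eq_bigr (fun Q => (\sum_(x in H^# | x \in Q) 1)%N)); last first.
  move=> Q XQ; rewrite card1 sum1dep_card; apply: eq_card => x; rewrite !inE -andbA.
  by rewrite [(x \in H) && _]andb_idl // => /(subsetP (sXH Q XQ)).
rewrite (exchange_big_dep (Q := fun Q x => (x \in H^#) && (x \in Q)) (mem H^#)) /=.
  rewrite -[X in (_ <= X)%N]sum1_card; apply: leq_sum => x H1x; rewrite sum1dep_card.
  apply/card_le1_eqP => Q Q'; rewrite !in_set => /and3P[XQ _ Qx] /and3P[XQ' _ Q'x].
  apply/eqP; apply: contraTT H1x => neQ; have : x \in Q' :&: Q by rewrite inE Q'x Qx.
  by rewrite (tiX Q' Q XQ' XQ neQ) inE => /eqP->; rewrite !inE eqxx.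
by move=> Q x _ /andP[].
Qed.

Lemma order3_order5_norm V P : #|V| = 3%N -> #|P| = 5%N -> P \subset 'N(V) ->
  V \subset 'N(P).
Proof.
move=> card_V card_P nVP.
have card_VP : #|V <*> P| = 15%N.
  by rewrite norm_joinEr // TI_cardMg ?card_V ?card_P // coprime_TIg // card_V card_P.
have sylP : 5.-Sylow(V <*> P) P by rewrite pHallE joing_subr card_VP card_P p_part.
have dvd_VP15 : (#|V <*> P| %| 15)%N by rewrite card_VP.
have := card_Syl_in_divisors (isT : prime 5) (isT : 0 < 15)%N dvd_VP15.
rewrite (_ : [seq _ <- _ | _] = [:: 1]%N) // inE => /eqP/(card_Syl_eq1_normal sylP).
by move/normal_norm; apply: subset_trans; rewrite joing_subl.
Qed.

Lemma not_card_Syl5_6_Syl3_10 H : #|H| = 30%N ->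
  #|'Syl_5(H)| = 6%N -> #|'Syl_3(H)| = 10%N -> False.
Proof.
move=> card_H n5 n3.
have card_Syl5 Q : Q \in 'Syl_5(H) -> #|Q| = 5%N.
  by rewrite inE => /card_Hall->; rewrite card_H p_part.
have card_Syl3 Q : Q \in 'Syl_3(H) -> #|Q| = 3%N.
  by rewrite inE => /card_Hall->; rewrite card_H p_part.
set X := 'Syl_5(H) :|: 'Syl_3(H).
have prime_X Q : Q \in X -> prime #|Q|.
  by rewrite in_setU => /orP[/card_Syl5 | /card_Syl3]->.
have sXH Q : Q \in X -> Q \subset H by rewrite in_setU !inE => /orP[] /pHall_sub.
have tiX : {in X &, forall Q Q', Q != Q' -> Q :&: Q' = 1}.
  move=> Q Q' XQ XQ' neQ; apply: prime_TIg (prime_X Q XQ) _; apply: contra neQ => sQQ'.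
  have /eqP eqQQ' : #|Q| == #|Q'| by rewrite -dvdn_prime2 ?prime_X ?cardSg.
  by rewrite -val_eqE eqEcard sQQ' eqQQ' /=.
have disj : [disjoint 'Syl_5(H) & 'Syl_3(H)].
  by apply/pred0P => Q /=; apply/negbTE/andP => -[/card_Syl5 c5 /card_Syl3]; rewrite c5.
have := sum_card_TI_le sXH tiX.
rewrite (eq_bigl [predU 'Syl_5(H) & 'Syl_3(H)]) => [|Q]; last by rewrite in_setU.
rewrite bigU //= (eq_bigr (fun=> 4%N) (fun Q XQ => congr1 predn (card_Syl5 Q XQ))).
rewrite (eq_bigr (fun=> 2%N) (fun Q XQ => congr1 predn (card_Syl3 Q XQ))).
by rewrite !sum_nat_const n5 n3 card_H.
Qed.

Lemma normal_Sylow5_of_dvdn30 H P : (#|H| %| 30)%N -> 5.-Sylow(H) P -> P <| H.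
Proof.
move=> dvd_H30 sylP.
have := card_Syl_in_divisors (isT : prime 5) (isT : 0 < 30)%N dvd_H30.
rewrite (_ : [seq _ <- _ | _] = [:: 1; 6]%N) // !inE.
case/orP=> [/eqP/(card_Syl_eq1_normal sylP) // | /eqP n5]; exfalso.
have iN : #|H : 'N_H(P)| = 6%N by rewrite -(card_Syl sylP).
have sPN : P \subset 'N_H(P) by rewrite subsetI (pHall_sub sylP) normG.
have card_HN : (#|'N_H(P)| * 6)%N = #|H| by rewrite -iN Lagrange ?subsetIl.
have dvd_N5 : (#|'N_H(P)| %| 5)%N by rewrite -(dvdn_pmul2r (isT : 0 < 6)%N) card_HN.
have card_P : #|P| = 5%N.
  apply/(prime_nt_dvdP (isT : prime 5)); last exact: dvdn_trans (cardSg sPN) dvd_N5.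
  apply/eqP => /eqP; rewrite -trivg_card1 => /eqP P1.
  by move: iN; rewrite P1 norm1 setIT indexgg.
have card_N : #|'N_H(P)| = 5%N.
  apply/(prime_nt_dvdP (isT : prime 5)) => //.
  by apply: contraTneq (cardSg sPN) => ->; rewrite card_P.
have card_H : #|H| = 30%N by rewrite -card_HN card_N.
have := card_Syl_in_divisors (isT : prime 3) (isT : 0 < 30)%N dvd_H30.
rewrite (_ : [seq _ <- _ | _] = [:: 1; 10]%N) // !inE.
case/orP=> /eqP n3; last exact: not_card_Syl5_6_Syl3_10 card_H n5 n3.
have [V sylV] := Sylow_exists 3 H.
have nVH := card_Syl_eq1_normal sylV n3.
have card_V : #|V| = 3%N by rewrite (card_Hall sylV) card_H p_part.
have nVP := subset_trans (pHall_sub sylP) (normal_norm nVH).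
have sVN : V \subset 'N_H(P) by rewrite subsetI (pHall_sub sylV) order3_order5_norm.
by have := cardSg sVN; rewrite card_V card_N.
Qed.

End OrderDividingThirty.

Section NormalSylow.

Variables (gT : finGroupType) (G : {group gT}).
Implicit Types H K P : {group gT}.
Local Open Scope group_scope.

Lemma normal_solvable_sub_solrad H : H <| G -> solvable H -> H \subset solrad G.
Proof.
by move=> nHG solH; apply: sub_gen; apply: (bigcup_max H) => //; rewrite nHG.
Qed.

Lemma normal_Sylow_p_solvable p P : p.-Sylow(G) P -> P <| G -> p_solvable p G.
Proof.
move=> sylP nPG; exists [:: P; G]; split=> //=.
rewrite normal1 nPG andbT (quotient_pgroup _ (pHall_pgroup sylP)) /=.
by apply/orP; right; rewrite /pgroup card_quotient ?normal_norm //; case/and3P: sylP.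
Qed.

Lemma normal_Sylow_of_quotient p K P : p.-Sylow(G) P -> K <| G -> K \subset 'N(P) ->
  P / K <| G / K -> P <| G.
Proof.
move=> sylP nKG nPK nPKGK.
have nKP : P \subset 'N(K) := subset_trans (pHall_sub sylP) (normal_norm nKG).
set M := coset K @*^-1 (P / K).
have nMG : M <| G by rewrite -(quotientGK nKG) cosetpre_normal.
have defM : M :=: K * P by rewrite /M quotientK.
have sPM : P \subset M by rewrite defM mulG_subr.
have sylPM : p.-Sylow(M) P := pHall_subl sPM (normal_sub nMG) sylP.
have nPM : M \subset 'N(P) by rewrite defM mul_subG ?normG.
by rewrite /normal (pHall_sub sylP) -{1}(Frattini_arg nMG sylPM) mul_subG ?subsetIr.
Qed.

End NormalSylow.

Section SylowFive.

Variables (gT : finGroupType) (G : {group gT}).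
Local Open Scope group_scope.
Hypothesis small_index :
  forall s, prime s -> s != 5%N -> s %| #|G| -> cent_Syl_index_lt4 G 5 s.

Lemma Syl5_kernel_index_dvdn30 : #|'Syl_5(G)| = 6%N ->
  (#|G : 'C_G('Syl_5(G) | 'JG)| %| 30)%N.
Proof.
move=> n5; pose K := 'C_G('Syl_5(G) | 'JG)%G.
have sKG : K \subset G := normal_sub (Syl_kernel_normal G 5).
have dvd5 : (#|G : K|`_5 %| 5)%N.
  have [P sylP] := Sylow_exists 5 G.
  have [R0 [sR0P iR0 nSylR0]] := exists_index_norm_Syl (isT : prime 5) n5 sylP.
  have sR0K : R0 \subset K := sub_Syl_kernel (subset_trans sR0P (pHall_sub sylP)) nSylR0.
  by rewrite -[X in (_ %| X)%N]iR0 (partn_indexg_dvd sylP sR0P sR0K sKG).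
apply: dvdn_trans (dvdn_mul6_partn (indexg_gt0 G K) _) (dvdn_mul (dvdnn 6) dvd5).
move=> s s_pr s'5 s_dvd.
have [R] := small_index s_pr s'5 (dvdn_trans s_dvd (dvdn_indexg G K)).
rewrite inE => sylR [S]; rewrite inE => sylS lt4.
have sCG : 'C_S(R) \subset G := subset_trans (subsetIl _ _) (pHall_sub sylS).
have sC : s.-group 'C_S(R) := pgroupS (subsetIl _ _) (pHall_pgroup sylS).
have sCK : 'C_S(R) \subset K := sub_Syl_kernel sCG
  (norm_Syl_of_cent (isT : prime 5) n5 sylR s_pr s'5 sC sCG (subsetIr _ _)).
apply: leq_ltn_trans lt4; apply: dvdn_leq; first exact: indexg_gt0.
exact: partn_indexg_dvd sylS (subsetIl _ _) sCK sKG.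
Qed.

Lemma card_Syl5_neq6 : #|'Syl_5(G)| != 6%N.
Proof.
apply/eqP => n5; have [P sylP] := Sylow_exists 5 G.
pose K := 'C_G('Syl_5(G) | 'JG)%G; have nKG : K <| G := Syl_kernel_normal G 5.
have nPK : P / K <| G / K.
  apply: normal_Sylow5_of_dvdn30 (quotient_pHall _ sylP).
    by rewrite card_quotient ?normal_norm ?Syl5_kernel_index_dvdn30.
  exact: subset_trans (pHall_sub sylP) (normal_norm nKG).
have sylP' : P \in 'Syl_5(G) by rewrite inE.
have nPG := normal_Sylow_of_quotient sylP nKG (Syl_kernel_norm sylP') nPK.
have : #|'Syl_5(G)| == 1%N by apply/normal_sylowP; exists P.
by rewrite n5.
Qed.

End SylowFive.

Theorem proposition3p10 (gT : finGroupType) (G : {group gT}) (p : nat) :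
  prime p -> (5 <= p)%N ->
  (2%:R / 5%:R < prstar G p p^' :> rat)%R ->
  (forall P : {group gT}, (P \in 'Syl_p(G))%g -> P \subset solrad G) /\ p_solvable p G.
Proof.
move=> p_pr p_ge5 lt_pr; have [P sylP] := Sylow_exists p G.
suff nPG : (P <| G)%g.
  split; last exact: normal_Sylow_p_solvable sylP nPG.
  move=> Q; rewrite inE => sylQ.
  apply: subset_trans (normal_solvable_sub_solrad nPG (pgroup_sol (pHall_pgroup sylP))).
  by rewrite (sub_normal_Hall sylP nPG (pHall_sub sylQ)) (pHall_pgroup sylQ).
have small_index s : prime s -> s != p -> s %| #|G| -> cent_Syl_index_lt4 G p s.
  exact: prstar_gt_two_fifths_cent.
have := dvdn6_modn_eq1 (card_Syl_dvdn6 p_pr small_index) p_ge5 (card_Syl_mod G p_pr).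
case=> [/(card_Syl_eq1_normal sylP) // | [p5 n6]].
by subst p; case/eqP: (card_Syl5_neq6 small_index).
Qed.
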